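(* In $\mathrm{Leib}$, for every $n\ge1$, $0\le i\le n$ and $0\le j\le n-1$: \[ \rho_i^n\chi_j^n=\begin{cases} \chi_{j+1}^{n+1}\rho_i^n & \text{if } j>i,\\ \chi_{i+1}^{n+1}\chi_i^{n+1}\rho_{i+1}^n-\chi_{i+1}^{n+1}\chi_i^{n+1}\chi_{i+1}^{n+1}\rho_i^n+\chi_i^{n+1}\chi_{i+1}^{n+1}\rho_{i-1}^n & \text{if } j=i,\\ \chi_j^{n+1}\rho_i^n & \text{if } j<i. \end{cases}\]
   Context: Let $\Bbbk$ be a field and $\mathbb{K}=\bigoplus_{n\in\mathbb N}\Bbbk1_n$ with $1_n1_m=\delta_{nm}1_n$. A $\mathbb K$-algebra is the categorical algebra of a small $\Bbbk$-linear category with object set $\mathbb N$ (a doubly graded algebra $\bigoplus_{n,m}V_{n,m}$ with local units $1_n$). Generators: $\partial^n_j$ ($n\ge0$, $0\le j\le n$) of bidegree $(n+1,n)$ (a morphism $n\to n+1$) and $\chi^n_i$ ($n\ge1$, $0\le i\le n-1$) of bidegree $(n,n)$; products with mismatched degrees are $0$. $\mathrm{Mag}$ is the free $\mathbb K$-algebra on the $\partial^n_j$ modulo $\partial^{n+1}_i\partial^n_j=\partial^{n+1}_{j+1}\partial^n_i$ for $0\le i<j\le n$. $\mathrm{Sym}$ is the free $\mathbb K$-algebra on the $\chi^n_i$ modulo $\chi^n_i\chi^n_j=\chi^n_j\chi^n_i$ ($|i-j|\ge2$), $\chi^n_i\chi^n_{i+1}\chi^n_i=\chi^n_{i+1}\chi^n_i\chi^n_{i+1}$,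 $\chi^n_i\chi^n_i=1_n$; thus $1_n\mathrm{Sym}1_n\cong\Bbbk[S_{n+1}]$. $\mathrm{Sym}\otimes_\zeta\mathrm{Mag}$ is the $\mathbb K$-algebra generated by $\mathrm{Sym}$ and $\mathrm{Mag}$ with underlying bimodule $\mathrm{Sym}\otimes_{\mathbb K}\mathrm{Mag}$ and additional commutation relations $\partial_i^n\chi_j^n=\chi^{n+1}_{j+1}\partial^n_i$ if $i<j$; $=\chi^{n+1}_{i+1}\chi^{n+1}_i\partial^n_{i+1}$ if $i=j$; $=\chi^{n+1}_{i-1}\chi^{n+1}_i\partial^n_{i-1}$ if $i=j+1$; $=\chi^{n+1}_j\partial^n_i$ if $i>j+1$. $\mathrm{Leib}$ is the quotient of $\mathrm{Sym}\otimes_\zeta\mathrm{Mag}$ by the ideal generated by $\partial^{n+1}_{j+1}\partial^n_j-(1_{n+2}-\chi^{n+2}_{j+1})\partial^{n+1}_j\partial^n_j$, $0\le j\le n$, $n\ge0$. In $\mathrm{Leib}$, $\rho^n_{-1}:=0$ and $\rho^n_j:=\partial^n_j+\sum_{a=1}^j\chi^{n+1}_j\cdots\chi^{n+1}_a\partial^n_{a-1}$ for $0\le j\le n$ (equivalently $\rho^n_{j+1}=\partial^n_{j+1}+\chi^{n+1}_{j+1}\rho^n_j$). *)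

(* The K-algebra Leib is given by a presentation
   (generators and relations); we encode it as a term algebra over the
   field F together with the inductively generated congruence [leib_eq]
   (the least equivalence compatible with the operations that satisfies the
   axioms of a non-unital associative F-algebra, the local-unit relations of a
   K-algebra, and the defining relations of Sym, Mag, Sym (x)_zeta Mag and Leib). *)
From HB Require Import structures.
From mathcomp Require Import all_boot all_algebra.
Set Implicit Arguments. Unset Strict Implicit. Unset Printing Implicit Defensive.
Import GRing.Theory.
Local Open Scope ring_scope.

Section Leib.
Variable F : fieldType.

Inductive term : Type :=
| tZero : term
| tOne  : nat -> term
| tD    : nat -> nat -> term     (* tD n j = \partial^n_j, morphism n -> n+1 *)
| tX    : nat -> nat -> term     (* tX n i = \chi^n_i, morphism n -> n *)
| tAdd  : term -> term -> term
| tScale : F -> term -> term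
| tMul  : term -> term -> term.  (* tMul a b = a b (b applied first) *)

Definition tSub (a b : term) := tAdd a (tScale (-1) b).

Inductive leib_eq : term -> term -> Prop :=
| l_refl a : leib_eq a a
| l_sym a b : leib_eq a b -> leib_eq b a
| l_trans a b c : leib_eq a b -> leib_eq b c -> leib_eq a c
| l_add a a' b b' : leib_eq a a' -> leib_eq b b' -> leib_eq (tAdd a b) (tAdd a' b')
| l_scale c a a' : leib_eq a a' -> leib_eq (tScale c a) (tScale c a')
| l_mul a a' b b' : leib_eq a a' -> leib_eq b b' -> leib_eq (tMul a b) (tMul a' b')
| l_addA a b c : leib_eq (tAdd a (tAdd b c)) (tAdd (tAdd a b) c)
| l_addC a b : leib_eq (tAdd a b) (tAdd b a)
| l_add0 a : leib_eq (tAdd tZero a) a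
| l_addN a : leib_eq (tAdd a (tScale (-1) a)) tZero
| l_scaleDr c a b : leib_eq (tScale c (tAdd a b)) (tAdd (tScale c a) (tScale c b))
| l_scaleDl c d a : leib_eq (tScale (c + d) a) (tAdd (tScale c a) (tScale d a))
| l_scaleA c d a : leib_eq (tScale c (tScale d a)) (tScale (c * d) a)
| l_scale1 a : leib_eq (tScale 1 a) a
| l_mulA a b c : leib_eq (tMul a (tMul b c)) (tMul (tMul a b) c)
| l_mulDl a b c : leib_eq (tMul (tAdd a b) c) (tAdd (tMul a c) (tMul b c))
| l_mulDr a b c : leib_eq (tMul a (tAdd b c)) (tAdd (tMul a b) (tMul a c))
| l_mulZl c a b : leib_eq (tMul (tScale c a) b) (tScale c (tMul a b))
| l_mulZr c a b : leib_eq (tMul a (tScale c b)) (tScale c (tMul a b))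
(* K-algebra structure: orthogonal idempotents 1_n and bidegrees *)
| l_one_same n : leib_eq (tMul (tOne n) (tOne n)) (tOne n)
| l_one_diff n m : n <> m -> leib_eq (tMul (tOne n) (tOne m)) tZero
| l_D_left n j : leib_eq (tMul (tOne n.+1) (tD n j)) (tD n j)
| l_D_right n j : leib_eq (tMul (tD n j) (tOne n)) (tD n j)
| l_X_left n i : leib_eq (tMul (tOne n) (tX n i)) (tX n i)
| l_X_right n i : leib_eq (tMul (tX n i) (tOne n)) (tX n i)
(* generators exist only for the stated index ranges *)
| l_D_range n j : (n < j)%N -> leib_eq (tD n j) tZero
| l_X_range n i : (n == 0%N) || (n <= i)%N -> leib_eq (tX n i) tZero
| l_mag n i j : (i < j)%N -> (j <= n)%N ->
    leib_eq (tMul (tD n.+1 i) (tD n j)) (tMul (tD n.+1 j.+1) (tD n i))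
| l_sym_far n i j : (1 <= n)%N -> (i <= n.-1)%N -> (j <= n.-1)%N ->
    (i + 2 <= j)%N || (j + 2 <= i)%N ->
    leib_eq (tMul (tX n i) (tX n j)) (tMul (tX n j) (tX n i))
| l_sym_braid n i : (1 <= n)%N -> (i.+1 <= n.-1)%N ->
    leib_eq (tMul (tX n i) (tMul (tX n i.+1) (tX n i)))
        (tMul (tX n i.+1) (tMul (tX n i) (tX n i.+1)))
| l_sym_inv n i : (1 <= n)%N -> (i <= n.-1)%N ->
    leib_eq (tMul (tX n i) (tX n i)) (tOne n)
| l_zeta_lt n i j : (1 <= n)%N -> (i <= n)%N -> (j <= n.-1)%N -> (i < j)%N ->
    leib_eq (tMul (tD n i) (tX n j)) (tMul (tX n.+1 j.+1) (tD n i))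
| l_zeta_eq n i : (1 <= n)%N -> (i <= n.-1)%N ->
    leib_eq (tMul (tD n i) (tX n i))
        (tMul (tX n.+1 i.+1) (tMul (tX n.+1 i) (tD n i.+1)))
| l_zeta_succ n j : (1 <= n)%N -> (j.+1 <= n)%N -> (j <= n.-1)%N ->
    leib_eq (tMul (tD n j.+1) (tX n j))
        (tMul (tX n.+1 j) (tMul (tX n.+1 j.+1) (tD n j)))
| l_zeta_gt n i j : (1 <= n)%N -> (i <= n)%N -> (j <= n.-1)%N -> (j.+1 < i)%N ->
    leib_eq (tMul (tD n i) (tX n j)) (tMul (tX n.+1 j) (tD n i))
| l_leib n j : (j <= n)%N ->
    leib_eq (tMul (tD n.+1 j.+1) (tD n j))
        (tMul (tSub (tOne n.+2) (tX n.+2 j.+1)) (tMul (tD n.+1 j) (tD n j))).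

Fixpoint rho (n j : nat) : term :=
  match j with
  | 0 => tD n 0
  | j'.+1 => tAdd (tD n j) (tMul (tX n.+1 j) (rho n j'))
  end.

Definition rho_pred (n i : nat) : term :=
  match i with 0 => tZero | i'.+1 => rho n i' end.

End Leib.

(** The cases [j > i] and [j < i] follow by induction on [i] from the
    recursion [rho_(i+1) = d_(i+1) + chi_(i+1) rho_i], commuting [chi_j] past
    [d] with the zeta relations and past [chi] with the far-commutation
    relation.  The diagonal case [j = i] instead uses
    [rho_i = d_i + chi_i rho_(i-1)]: the zeta relation turns [d_i chi_i] into
    [chi_(i+1) chi_i d_(i+1)], and [d_(i+1) = rho_(i+1) - chi_(i+1) rho_i].
    The single step of the induction for [j < i] that is not a far commutation,
    [rho_(i+1) chi_i = chi_i rho_(i+1)], is obtained by substituting the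
    diagonal formula and cancelling with [chi_(i+1)^2 = 1] and the braid
    relation. *)
From mathcomp Require Import all_boot all_algebra.
From mathcomp Require Import zify.
From Stdlib Require Import Setoid Morphisms.
Local Open Scope ring_scope.

Section LeibComputations.
Variable F : fieldType.
Local Notation "a ≡ b" := (@leib_eq F a b) (at level 70).
Local Notation D := (@tD F).
Local Notation X := (@tX F).
Local Notation "a + b" := (tAdd a b).
Local Notation "a * b" := (tMul a b).
Local Notation Z0 := (@tZero F).
Local Notation N := (@tScale F (-1)).

Instance leib_eq_Equivalence : Equivalence (@leib_eq F).
Proof. split; [exact: l_refl | exact: l_sym | exact: l_trans]. Qed.

Instance tAdd_Proper : Proper (@leib_eq F ==> @leib_eq F ==> @leib_eq F) (@tAdd F).
Proof. by move=> ? ? ? ? ? ?; apply: l_add. Qed.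

Instance tMul_Proper : Proper (@leib_eq F ==> @leib_eq F ==> @leib_eq F) (@tMul F).
Proof. by move=> ? ? ? ? ? ?; apply: l_mul. Qed.

Instance tScale_Proper c : Proper (@leib_eq F ==> @leib_eq F) (@tScale F c).
Proof. by move=> ? ? ?; apply: l_scale. Qed.

Instance tSub_Proper : Proper (@leib_eq F ==> @leib_eq F ==> @leib_eq F) (@tSub F).
Proof. by move=> ? ? ? ? ? ?; apply: l_add => //; apply: l_scale. Qed.

Lemma addr0 a : a + Z0 ≡ a.
Proof. setoid_rewrite l_addC; exact: l_add0. Qed.

Lemma addrK a b : (a + b) + N b ≡ a.
Proof. setoid_rewrite <- l_addA; setoid_rewrite l_addN; exact: addr0. Qed.

Lemma eq0_addrr x : x ≡ x + x -> x ≡ Z0.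
Proof.
move=> xx; symmetry; setoid_rewrite <- (l_addN x); setoid_rewrite xx at 1.
setoid_rewrite <- l_addA; setoid_rewrite l_addN; exact: addr0.
Qed.

Lemma mulr0 a : a * Z0 ≡ Z0.
Proof. by apply: eq0_addrr; setoid_rewrite <- l_mulDr; setoid_rewrite l_add0; reflexivity. Qed.

Lemma mul0r a : Z0 * a ≡ Z0.
Proof. by apply: eq0_addrr; setoid_rewrite <- l_mulDl; setoid_rewrite l_add0; reflexivity. Qed.

Lemma mulrBr a b c : a * tSub b c ≡ tSub (a * b) (a * c).
Proof. by rewrite /tSub; setoid_rewrite l_mulDr; setoid_rewrite l_mulZr; reflexivity. Qed.

Lemma addr_subKC a b c : a + (tSub b (a + c) + c) ≡ b.
Proof.
rewrite /tSub; setoid_rewrite l_scaleDr.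
setoid_rewrite <- (l_addA b (N a + N c) c).
setoid_rewrite <- (l_addA (N a) (N c) c).
setoid_rewrite (l_addC (N c) c); setoid_rewrite (l_addN c).
setoid_rewrite addr0; setoid_rewrite (l_addC b (N a)).
setoid_rewrite (l_addA a (N a) b); setoid_rewrite (l_addN a); exact: l_add0.
Qed.

Lemma mulrA3 a b c y : a * (b * (c * y)) ≡ (a * (b * c)) * y.
Proof. setoid_rewrite (l_mulA b c y); exact: l_mulA. Qed.

Lemma chi_mulK m k k' y : (1 <= m)%N -> (k <= m.-1)%N -> (k' <= m.-1)%N ->
  X m k * (X m k * (X m k' * y)) ≡ X m k' * y.
Proof.
move=> m_gt0 k_lt k'_lt; setoid_rewrite (l_mulA (X m k) (X m k)).
setoid_rewrite l_sym_inv => //; setoid_rewrite (l_mulA (tOne F m)).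
setoid_rewrite l_X_left; reflexivity.
Qed.

Lemma rhoE n i : rho F n i ≡ D n i + X n.+1 i * rho_pred F n i.
Proof.
case: i => [|i] /=; last reflexivity.
by setoid_rewrite mulr0; symmetry; apply: addr0.
Qed.

Lemma rho_chi_shift n i j : (1 <= n)%N -> (j <= n.-1)%N -> (i < j)%N ->
  rho F n i * X n j ≡ X n.+1 j.+1 * rho F n i.
Proof.
move=> n_gt0 j_lt; elim: i => [|i IHi] i_lt /=; first by apply: l_zeta_lt; lia.
setoid_rewrite l_mulDl; setoid_rewrite l_mulDr.
apply: l_add; first by apply: l_zeta_lt; lia.
setoid_rewrite <- l_mulA; setoid_rewrite (IHi ltac:(lia)).
setoid_rewrite (l_mulA (X n.+1 i.+1)); setoid_rewrite (l_mulA (X n.+1 j.+1)).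
by apply: l_mul; [apply: l_sym_far; lia | reflexivity].
Qed.

Lemma rho_pred_chi n i : (1 <= n)%N -> (i <= n.-1)%N ->
  rho_pred F n i * X n i ≡ X n.+1 i.+1 * rho_pred F n i.
Proof.
move=> n_gt0; case: i => [|i] i_lt /=.
  setoid_rewrite mul0r; setoid_rewrite mulr0; reflexivity.
by apply: rho_chi_shift => //; lia.
Qed.

Lemma rho_chi_diag n i : (1 <= n)%N -> (i <= n.-1)%N ->
  rho F n i * X n i ≡
  tSub (X n.+1 i.+1 * (X n.+1 i * rho F n i.+1))
       (X n.+1 i.+1 * (X n.+1 i * (X n.+1 i.+1 * rho F n i)))
  + X n.+1 i * (X n.+1 i.+1 * rho_pred F n i).
Proof.
move=> n_gt0 i_lt.
have -> : rho F n i * X n i ≡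
    X n.+1 i.+1 * (X n.+1 i * D n i.+1) + X n.+1 i * (X n.+1 i.+1 * rho_pred F n i).
  setoid_rewrite rhoE at 1; setoid_rewrite l_mulDl.
  apply: l_add; first by apply: l_zeta_eq; lia.
  setoid_rewrite <- l_mulA; setoid_rewrite rho_pred_chi => //; reflexivity.
rewrite [rho F n i.+1]/=.
setoid_rewrite (l_mulDr (X n.+1 i) (D n i.+1)).
setoid_rewrite (l_mulDr (X n.+1 i.+1) (X n.+1 i * D n i.+1)).
by apply: l_add; [symmetry; apply: addrK | reflexivity].
Qed.

Lemma rho_succ_chi n i : (1 <= n)%N -> (i < n)%N ->
  rho F n i.+1 * X n i ≡ X n.+1 i * rho F n i.+1.
Proof.
move=> n_gt0 i_lt /=.
setoid_rewrite l_mulDl; setoid_rewrite <- (l_mulA (X n.+1 i.+1)).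
setoid_rewrite (@rho_chi_diag n i n_gt0 ltac:(lia)).
setoid_rewrite (@l_zeta_succ F n i ltac:(lia) ltac:(lia) ltac:(lia)).
set A := X n.+1 i * (X n.+1 i.+1 * D n i).
set B := X n.+1 i * rho F n i.+1.
set C := X n.+1 i.+1 * (X n.+1 i * (X n.+1 i.+1 * rho_pred F n i)).
transitivity (A + (tSub B (A + C) + C)); last exact: addr_subKC.
apply: l_add; first reflexivity.
setoid_rewrite l_mulDr; apply: l_add; last reflexivity.
setoid_rewrite mulrBr; rewrite /tSub; apply: l_add.
  by apply: chi_mulK; lia.
apply: l_scale; setoid_rewrite chi_mulK; try lia.
setoid_rewrite (rhoE n i) at 1.
setoid_rewrite l_mulDr; setoid_rewrite l_mulDr; apply: l_add; first reflexivity.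
rewrite /C; setoid_rewrite mulrA3.
by apply: l_mul; [apply: l_sym_braid; lia | reflexivity].
Qed.

Lemma rho_chi_fix n i j : (1 <= n)%N -> (i <= n)%N -> (j < i)%N ->
  rho F n i * X n j ≡ X n.+1 j * rho F n i.
Proof.
move=> n_gt0; elim: i => [|i IHi] i_le j_lt //.
have [->|j_lt_i] : j = i \/ (j < i)%N by lia.
  by apply: rho_succ_chi; lia.
rewrite [rho F n i.+1]/=; setoid_rewrite l_mulDl.
setoid_rewrite <- (l_mulA (X n.+1 i.+1)); setoid_rewrite (l_mulDr (X n.+1 j)).
apply: l_add; first by apply: l_zeta_gt; lia.
setoid_rewrite (IHi ltac:(lia) j_lt_i); setoid_rewrite l_mulA.
by apply: l_mul; [apply: l_sym_far; lia | reflexivity].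
Qed.

End LeibComputations.

Theorem lemma3p8 (F : fieldType) (n i j : nat) :
  (1 <= n)%N -> (i <= n)%N -> (j <= n.-1)%N ->
  [/\ (i < j)%N ->
        leib_eq (tMul (rho F n i) (tX F n j)) (tMul (tX F n.+1 j.+1) (rho F n i)),
      j = i ->
        leib_eq (tMul (rho F n i) (tX F n j))
          (tAdd (tSub (tMul (tX F n.+1 i.+1) (tMul (tX F n.+1 i) (rho F n i.+1)))
                      (tMul (tX F n.+1 i.+1) (tMul (tX F n.+1 i)
                                (tMul (tX F n.+1 i.+1) (rho F n i)))))
                (tMul (tX F n.+1 i) (tMul (tX F n.+1 i.+1) (rho_pred F n i))))
    & (j < i)%N ->
        leib_eq (tMul (rho F n i) (tX F n j)) (tMul (tX F n.+1 j) (rho F n i))].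
Proof.
move=> n_gt0 i_le j_lt; split=> [ij|ji_eq|ji].
- exact: rho_chi_shift.
- by subst j; apply: rho_chi_diag.
- exact: rho_chi_fix.
Qed.
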